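(* Consider the noisy Hegselmann–Krause model with homogeneously stubborn agents described in the context, with confidence bound $\epsilon\in(0,1]$ and noise bound $\delta$ satisfying $0<\delta\le\frac{\epsilon}{2(n+1)}$. Suppose that almost surely there is a finite (possibly random) time $T\ge0$ such that $d_{\mathcal{V}}^{B_1}(T):=\max_{i\in\mathcal{V}}|x_i(T)-B_1|\le(n+1)\delta$. Then almost surely $d_{\mathcal{V}}\le 2\delta$ and $d_{\mathcal{V}}^{B_1}\le(n+1)\delta$, where $d_{\mathcal{V}}=\limsup_{t\to\infty}\max_{i,j\in\mathcal{V}}|x_i(t)-x_j(t)|$ and $d_{\mathcal{V}}^{B_1}=\limsup_{t\to\infty}\max_{i\in\mathcal{V}}|x_i(t)-B_1|$.
   Context: Regular agents: $\mathcal{V}=\{1,\dots,n\}$, with opinions $x_i(t)\in[0,1]$, $t=0,1,2,\dots$. Stubborn agents: a finite nonempty index set $\mathcal{B}_1$ disjoint from $\mathcal{V}$, with $x_k(t)\equiv B_1$ for all $k\in\mathcal{B}_1$ and all $t\ge0$, where $B_1\in[0,1]$ is fixed. For $i\in\mathcal{V}$, the neighbor set is $\mathcal{N}(i,x(t))=\{j\in\mathcal{V}\cup\mathcal{B}_1: |x_j(t)-x_i(t)|\le\epsilon\}$ (it contains $i$). The update for $i\in\mathcal{V}$ is $x_i^*(t)=|\mathcal{N}(i,x(t))|^{-1}\sum_{j\in\mathcal{N}(i,x(t))}x_j(t)+\xi_i(t+1)$, and $x_i(t+1)=1$ if $x_i^*(t)>1$, $x_i(t+1)=x_i^*(t)$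 if $x_i^*(t)\in[0,1]$, $x_i(t+1)=0$ if $x_i^*(t)<0$. The noises $\{\xi_i(t)\}_{i\in\mathcal{V},t\ge1}$ are i.i.d. real random variables with $E\xi_1(1)=0$, $E\xi_1(1)^2>0$ and $|\xi_1(1)|\le\delta$ almost surely. *)

From Stdlib Require Import Reals List.
Import ListNotations.
Open Scope R_scope.

(* Regular agents are indexed 0..n-1 (paper: 1..n); a state is x : nat -> R,
   only x i for i < n is relevant.  The m >= 1 stubborn agents all sit at B1. *)

Definition nbr_sum (n m : nat) (eps B1 : R) (x : nat -> R) (i : nat) : R :=
  fold_right Rplus 0
    (map (fun j => if Rle_dec (Rabs (x j - x i)) eps then x j else 0) (seq 0 n))
  + (if Rle_dec (Rabs (B1 - x i)) eps then INR m * B1 else 0).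

Definition nbr_card (n m : nat) (eps B1 : R) (x : nat -> R) (i : nat) : R :=
  fold_right Rplus 0
    (map (fun j => if Rle_dec (Rabs (x j - x i)) eps then 1 else 0) (seq 0 n))
  + (if Rle_dec (Rabs (B1 - x i)) eps then INR m else 0).

Definition clip01 (y : R) : R :=
  if Rlt_dec 1 y then 1 else if Rlt_dec y 0 then 0 else y.

Definition hk_trajectory (n m : nat) (eps B1 : R) (xi : nat -> nat -> R)
    (x : nat -> nat -> R) : Prop :=
  (forall i, (i < n)%nat -> 0 <= x 0%nat i <= 1) /\
  forall t i, (i < n)%nat ->
    x (S t) i = clip01 (nbr_sum n m eps B1 (x t) i / nbr_card n m eps B1 (x t) i
                        + xi (S t) i).

(* max_{i in V} |x_i - B1|  (all terms are >= 0, so 0 is a neutral default) *)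
Definition dev_B (n : nat) (B1 : R) (x : nat -> R) : R :=
  fold_right Rmax 0 (map (fun i => Rabs (x i - B1)) (seq 0 n)).

Definition diam (n : nat) (x : nat -> R) : R :=
  fold_right Rmax 0
    (flat_map (fun i => map (fun j => Rabs (x i - x j)) (seq 0 n)) (seq 0 n)).

Definition limsup_le (a : nat -> R) (c : R) : Prop :=
  forall e, 0 < e -> exists N, forall t, (N <= t)%nat -> a t <= c + e.

(* Once every regular agent is within (n+1)δ of B1, any two agents, stubborn ones
   included, are within 2(n+1)δ <= ε of each other.  Every regular agent then sees
   everybody and computes the same average, in which B1 carries weight
   m/(n+m) >= 1/(n+1); that average is within nδ of B1, so after the noise and the
   truncation each agent is again within (n+1)δ of B1 (the region is invariant),
   and two agents differ only by their noises, i.e. by at most 2δ. *)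

From Stdlib Require Import Reals List Lra Lia.
Open Scope R_scope.

Lemma fold_Rmax_le (l : list R) (c : R) :
  0 <= c -> (forall a, In a l -> a <= c) -> fold_right Rmax 0 l <= c.
Proof.
  intros Hc; induction l as [|a l IH]; simpl; intros Hl; [exact Hc|].
  apply Rmax_lub; auto.
Qed.

Lemma le_fold_Rmax (l : list R) (a : R) : In a l -> a <= fold_right Rmax 0 l.
Proof.
  induction l as [|b l IH]; simpl; [tauto|].
  intros [<-|Ha]; [apply Rmax_l|].
  eapply Rle_trans; [apply IH, Ha|apply Rmax_r].
Qed.

Lemma dev_B_le_iff (n : nat) (B1 c : R) (y : nat -> R) : 0 <= c ->
  dev_B n B1 y <= c <-> forall i, (i < n)%nat -> Rabs (y i - B1) <= c.
Proof.
  intros Hc; unfold dev_B; split.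
  - intros Hd i Hi; eapply Rle_trans; [|exact Hd].
    apply le_fold_Rmax, in_map_iff; exists i; split; [reflexivity|].
    apply in_seq; lia.
  - intros Hy; apply fold_Rmax_le; [exact Hc|].
    intros a Ha; apply in_map_iff in Ha as [i [<- Hi]].
    apply in_seq in Hi; apply Hy; lia.
Qed.

Lemma diam_le (n : nat) (c : R) (y : nat -> R) : 0 <= c ->
  (forall i j, (i < n)%nat -> (j < n)%nat -> Rabs (y i - y j) <= c) -> diam n y <= c.
Proof.
  intros Hc Hy; unfold diam; apply fold_Rmax_le; [exact Hc|].
  intros a Ha; apply in_flat_map in Ha as [i [Hi Ha]].
  apply in_map_iff in Ha as [j [<- Hj]]; apply in_seq in Hi, Hj.
  apply Hy; lia.
Qed.

Lemma limsup_le_eventually (a : nat -> R) (c : R) (N : nat) :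
  (forall t, (N <= t)%nat -> a t <= c) -> limsup_le a c.
Proof. intros Ha e He; exists N; intros t Ht; specialize (Ha t Ht); lra. Qed.

Lemma Rabs_minus_le (a b : R) : Rabs (a - b) <= Rabs a + Rabs b.
Proof. unfold Rminus; rewrite <- (Rabs_Ropp b); apply Rabs_triang. Qed.

Lemma clip01_dist_le (y B : R) : 0 <= B <= 1 -> Rabs (clip01 y - B) <= Rabs (y - B).
Proof.
  intros HB; unfold clip01.
  destruct (Rlt_dec 1 y); [|destruct (Rlt_dec y 0)];
    unfold Rabs; repeat destruct Rcase_abs; lra.
Qed.

Lemma clip01_lipschitz (y z : R) : Rabs (clip01 y - clip01 z) <= Rabs (y - z).
Proof.
  unfold clip01.
  destruct (Rlt_dec 1 y); destruct (Rlt_dec y 0); destruct (Rlt_dec 1 z);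
    destruct (Rlt_dec z 0); unfold Rabs; repeat destruct Rcase_abs; lra.
Qed.

Lemma sum_map_if_true (P : nat -> Prop) (dec : forall j, {P j} + {~ P j})
    (f g : nat -> R) (l : list nat) :
  (forall j, In j l -> P j) ->
  fold_right Rplus 0 (map (fun j => if dec j then f j else g j) l)
  = fold_right Rplus 0 (map f l).
Proof.
  induction l as [|a l IH]; simpl; intros Hl; [reflexivity|].
  destruct (dec a) as [_|HnP]; [|exfalso; apply HnP; auto].
  rewrite IH; auto.
Qed.

Lemma sum_map_const (c : R) (l : list nat) :
  fold_right Rplus 0 (map (fun _ => c) l) = INR (length l) * c.
Proof.
  induction l as [|a l IH]; cbn [fold_right map length]; [simpl; ring|].
  rewrite IH, S_INR; ring.
Qed.

Lemma sum_map_dev_le (f : nat -> R) (l : list nat) (B D : R) :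
  (forall j, In j l -> Rabs (f j - B) <= D) ->
  Rabs (fold_right Rplus 0 (map f l) - INR (length l) * B) <= INR (length l) * D.
Proof.
  induction l as [|a l IH]; cbn [fold_right map length]; intros Hl.
  - simpl; rewrite Rmult_0_l, Rminus_0_r, Rabs_R0; lra.
  - rewrite S_INR.
    replace (f a + fold_right Rplus 0 (map f l) - (INR (length l) + 1) * B)
      with ((f a - B) + (fold_right Rplus 0 (map f l) - INR (length l) * B)) by ring.
    eapply Rle_trans; [apply Rabs_triang|].
    pose proof (Hl a (or_introl eq_refl)).
    pose proof (IH (fun j Hj => Hl j (or_intror Hj))); lra.
Qed.

Definition global_avg (n m : nat) (B1 : R) (y : nat -> R) : R :=
  (fold_right Rplus 0 (map y (seq 0 n)) + INR m * B1) / (INR n + INR m).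

Lemma nbr_avg_all_visible (n m : nat) (eps B1 : R) (y : nat -> R) (i : nat) :
  (forall j, (j < n)%nat -> Rabs (y j - y i) <= eps) -> Rabs (B1 - y i) <= eps ->
  nbr_sum n m eps B1 y i / nbr_card n m eps B1 y i = global_avg n m B1 y.
Proof.
  intros Hy HB; unfold nbr_sum, nbr_card, global_avg.
  assert (Hseq : forall j, In j (seq 0 n) -> Rabs (y j - y i) <= eps)
    by (intros j Hj; apply in_seq in Hj; apply Hy; lia).
  rewrite !(sum_map_if_true _ (fun j => Rle_dec (Rabs (y j - y i)) eps) _ _ _ Hseq).
  rewrite sum_map_const, length_seq, Rmult_1_r.
  destruct (Rle_dec (Rabs (B1 - y i)) eps); [reflexivity|contradiction].
Qed.

Lemma global_avg_dev_le (n m : nat) (B1 D : R) (y : nat -> R) : (1 <= m)%nat ->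
  (forall j, (j < n)%nat -> Rabs (y j - B1) <= D) ->
  Rabs (global_avg n m B1 y - B1) <= INR n / (INR n + INR m) * D.
Proof.
  intros Hm Hy; unfold global_avg.
  pose proof (le_INR 1 m Hm) as Hm1; pose proof (pos_INR n) as Hn; simpl in Hm1.
  set (k := INR n + INR m); assert (Hk : 0 < k) by (unfold k; lra).
  set (S0 := fold_right Rplus 0 (map y (seq 0 n))).
  pose proof (sum_map_dev_le y (seq 0 n) B1 D) as Hsum; rewrite length_seq in Hsum.
  specialize (Hsum (fun j Hj => Hy j ltac:(apply in_seq in Hj; lia))); fold S0 in Hsum.
  replace ((S0 + INR m * B1) / k - B1) with ((S0 - INR n * B1) / k)
    by (unfold k; field; lra).
  unfold Rdiv; rewrite Rabs_mult, (Rabs_pos_eq (/ k)) by (left; apply Rinv_0_lt_compat, Hk).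
  replace (INR n * / k * D) with (INR n * D * / k) by ring.
  apply Rmult_le_compat_r; [left; apply Rinv_0_lt_compat, Hk|exact Hsum].
Qed.

Section Dynamics.

Context {n m : nat} {eps delta B1 : R} {xi : nat -> nat -> R} {x : nat -> nat -> R}.
Hypothesis Hm : (1 <= m)%nat.
Hypothesis HB1 : 0 <= B1 <= 1.
Hypothesis Hdelta : 0 < delta <= eps / (2 * (INR n + 1)).
Hypothesis Hxi : forall t i, (i < n)%nat -> Rabs (xi t i) <= delta.
Hypothesis Htraj : hk_trajectory n m eps B1 xi x.

Let D := (INR n + 1) * delta.

Lemma D_nonneg : 0 <= D.
Proof. unfold D; pose proof (pos_INR n); nra. Qed.

Lemma twice_D_le_eps : 2 * D <= eps.
Proof.
  unfold D; destruct Hdelta as [_ Hle].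
  assert (Hn : 0 < 2 * (INR n + 1)) by (pose proof (pos_INR n); lra).
  apply (Rmult_le_compat_r _ _ _ (Rlt_le _ _ Hn)) in Hle.
  unfold Rdiv in Hle; rewrite Rmult_assoc, Rinv_l in Hle; lra.
Qed.

Lemma step_near_B1 t i : dev_B n B1 (x t) <= D -> (i < n)%nat ->
  x (S t) i = clip01 (global_avg n m B1 (x t) + xi (S t) i).
Proof.
  intros Hdev Hi; rewrite (dev_B_le_iff n B1 D (x t) D_nonneg) in Hdev.
  pose proof twice_D_le_eps; pose proof D_nonneg.
  destruct Htraj as [_ Hstep]; rewrite Hstep by exact Hi.
  rewrite nbr_avg_all_visible; [reflexivity| |].
  - intros j Hj; pose proof (Hdev j Hj); pose proof (Hdev i Hi).
    pose proof (Rabs_minus_le (x t j - B1) (x t i - B1)).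
    replace (x t j - B1 - (x t i - B1)) with (x t j - x t i) in * by ring; lra.
  - rewrite Rabs_minus_sym; pose proof (Hdev i Hi); lra.
Qed.

Lemma global_avg_near_B1 t : dev_B n B1 (x t) <= D ->
  Rabs (global_avg n m B1 (x t) - B1) <= INR n * delta.
Proof.
  intros Hdev; rewrite (dev_B_le_iff n B1 D (x t) D_nonneg) in Hdev.
  eapply Rle_trans; [exact (global_avg_dev_le _ _ _ _ _ Hm Hdev)|].
  pose proof (le_INR 1 m Hm) as Hm1; pose proof (pos_INR n) as Hn; simpl in Hm1.
  unfold D; apply (Rmult_le_reg_r (INR n + INR m)); [lra|].
  replace (INR n / (INR n + INR m) * ((INR n + 1) * delta) * (INR n + INR m))
    with (INR n * ((INR n + 1) * delta)) by (field; lra).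
  assert (0 <= INR n * delta * (INR m - 1))
    by (destruct Hdelta; apply Rmult_le_pos; [apply Rmult_le_pos|]; lra).
  nra.
Qed.

Lemma dev_B_step t : dev_B n B1 (x t) <= D -> dev_B n B1 (x (S t)) <= D.
Proof.
  intros Hdev; apply (dev_B_le_iff _ _ _ _ D_nonneg); intros i Hi.
  rewrite (step_near_B1 t i Hdev Hi).
  eapply Rle_trans; [apply clip01_dist_le, HB1|].
  pose proof (global_avg_near_B1 t Hdev); pose proof (Hxi (S t) i Hi).
  pose proof (Rabs_minus_le (global_avg n m B1 (x t) - B1) (- xi (S t) i)).
  rewrite Rabs_Ropp in *.
  replace (global_avg n m B1 (x t) - B1 - - xi (S t) i)
    with (global_avg n m B1 (x t) + xi (S t) i - B1) in * by ring.
  unfold D; lra.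
Qed.

Lemma dev_B_forever T : dev_B n B1 (x T) <= D ->
  forall t, (T <= t)%nat -> dev_B n B1 (x t) <= D.
Proof.
  intros HT t Ht; induction Ht as [|t _ IH]; [exact HT|].
  exact (dev_B_step t IH).
Qed.

Lemma diam_step t : dev_B n B1 (x t) <= D -> diam n (x (S t)) <= 2 * delta.
Proof.
  intros Hdev; apply diam_le; [destruct Hdelta; lra|]; intros i j Hi Hj.
  rewrite (step_near_B1 t i Hdev Hi), (step_near_B1 t j Hdev Hj).
  eapply Rle_trans; [apply clip01_lipschitz|].
  replace (global_avg n m B1 (x t) + xi (S t) i - (global_avg n m B1 (x t) + xi (S t) j))
    with (xi (S t) i - xi (S t) j) by ring.
  pose proof (Rabs_minus_le (xi (S t) i) (xi (S t) j)).
  pose proof (Hxi (S t) i Hi); pose proof (Hxi (S t) j Hj); lra.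
Qed.

End Dynamics.

Theorem lemma3 (n m : nat) (eps delta B1 : R)
  (xi : nat -> nat -> R) (x : nat -> nat -> R) :
  (1 <= m)%nat ->
  0 <= B1 <= 1 ->
  0 < eps <= 1 ->
  0 < delta <= eps / (2 * (INR n + 1)) ->
  (forall t i, (i < n)%nat -> Rabs (xi t i) <= delta) ->
  hk_trajectory n m eps B1 xi x ->
  (exists T : nat, dev_B n B1 (x T) <= (INR n + 1) * delta) ->
  limsup_le (fun t => diam n (x t)) (2 * delta) /\
  limsup_le (fun t => dev_B n B1 (x t)) ((INR n + 1) * delta).
Proof.
  intros Hm HB1 _ Hdelta Hxi Htraj [T HT].
  pose proof (dev_B_forever Hm HB1 Hdelta Hxi Htraj T HT) as Hforever.
  split.
  - apply (limsup_le_eventually _ _ (S T)); intros [|t] Ht; [lia|].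
    apply (diam_step Hdelta Hxi Htraj), Hforever; lia.
  - exact (limsup_le_eventually _ _ T Hforever).
Qed.
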